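(* Let $n>s\ge1$ be integers. If $F_{s,k}(n)\neq 0$ for every $k\in\{1,2,\dots,n\}$, then for any two $n$-multisets $A,B$ of complex numbers, $A^{(s)}=B^{(s)}$ implies $A=B$.
   Context: An $n$-multiset is a multiset $A=\{a_1,\dots,a_n\}$ of $n$ numbers, counted with multiplicity. For $1\le s\le n$, $A^{(s)}$ denotes the multiset of the $\binom{n}{s}$ numbers $a_{i_1}+\dots+a_{i_s}$ over all $1\le i_1<\dots<i_s\le n$. For an integer $j\ge0$, $\binom{x}{j}=x(x-1)\cdots(x-j+1)/j!$ as a polynomial in $x$, and $\binom{x}{j}=0$ for $j<0$. For integers $s\ge1$, $k\ge1$, the Moser polynomial is $F_{s,k}(x)=\sum_{p=1}^{s}(-1)^{p-1}p^{k-1}\binom{x}{s-p}$; for integers $s<1$ set $F_{s,k}\equiv0$. *)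

From HB Require Import structures.
From mathcomp Require Import all_boot all_order all_algebra.
Set Implicit Arguments. Unset Strict Implicit. Unset Printing Implicit Defensive.
Import Order.TTheory GRing.Theory Num.Theory.
Local Open Scope ring_scope.

(* Value at the natural number x = n of the Moser polynomial
   F_{s,k}(x) = \sum_{p=1}^{s} (-1)^(p-1) p^(k-1) binom(x, s-p),
   computed in int; for x = n a natural number the polynomial binom(x, j)
   evaluates to 'C(n, j) (j = s - p >= 0 since p <= s). *)
Definition moserF (s k n : nat) : int :=
  \sum_(1 <= p < s.+1) (-1) ^+ p.-1 * (p ^ k.-1)%:R * ('C(n, s - p))%:R.

(* A^(s): the multiset (as a sequence, compared up to permutation) of the
   sums a_{i_1} + ... + a_{i_s} over all s-subsets {i_1 < ... < i_s}
   of the index set of the n-multiset A = (a_i)_{i < n}. *)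
Definition subsums (C : nmodType) (n s : nat) (a : n.-tuple C) : seq C :=
  map (fun S0 : {set 'I_n} => \sum_(i in S0) tnth a i)
      (enum [set S0 : {set 'I_n} | #|S0| == s]).

From HB Require Import structures.
From mathcomp Require Import all_boot all_order all_algebra.
From mathcomp Require Import ring mpoly.
Set Implicit Arguments. Unset Strict Implicit. Unset Printing Implicit Defensive.
Import Order.TTheory GRing.Theory Num.Theory.
Local Open Scope ring_scope.

(* Write [Q_{r,k}] for the power sums of the subset sums [A^(r)] and [p_m] for
   the power sums of [A].  Expanding [(sum_S a)^(k+1)] and sorting the pairs
   (S, l) by whether [l] lies in [S] gives a telescoping recursion for
   [Q_{r+1,k+1}] in terms of [Q_{r',k'}] with [k' <= k] and [p_1, ..., p_{k+1}],
   in which [p_{k+1}] occurs with coefficient [F_{r+1,k+1}(n)].  Hence [A^(s)] and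
   [B^(s)] determine [p_1, ..., p_n] one after the other; by Newton's identities
   these determine the elementary symmetric functions, hence [prod (X - a_i)]. *)

Section SubsetSums.
Variables (R : comNzRingType) (I : finType).
Implicit Types (a : I -> R) (S : {set I}).

Definition power_sum a m := \sum_i a i ^+ m.

Definition subset_power_sum a r k :=
  \sum_(S : {set I} | #|S| == r) (\sum_(i in S) a i) ^+ k.

Definition elem_sym a r := \sum_(S : {set I} | #|S| == r) \prod_(i in S) a i.

Lemma sum_cardS_setD1 (phi : {set I} -> I -> R) r :
  \sum_(S : {set I} | #|S| == r.+1) \sum_(l in S) phi (S :\ l) l =
  \sum_(S : {set I} | #|S| == r) \sum_(l | l \notin S) phi S l.
Proof.
rewrite !pair_big_dep /=.
rewrite (reindex_onto (fun p : {set I} * I => (p.2 |: p.1, p.2))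
                      (fun p : {set I} * I => (p.1 :\ p.2, p.2))) /=; last first.
  by case=> S l /= /andP[_ lS]; rewrite setD1K.
apply: eq_big => [[S l]|[S l]] /=; last by move=> /andP[_ /eqP [->]].
rewrite setU11 andbT cardsU1.
have [lS|lS] := boolP (l \in S); last by rewrite setU1K // eqxx add1n eqSS.
rewrite andbF; apply/negbTE/negP => /andP[_ /eqP [E]].
by move: (setD11 l (l |: S)); rewrite E lS.
Qed.

Section Telescope.
Variable tau : {set I} -> I -> nat -> R.
Hypothesis tau_shift : forall S l j, l \in S -> tau S l j = tau (S :\ l) l j.+1.

Definition sum_notin r j := \sum_(S : {set I} | #|S| == r) \sum_(l | l \notin S) tau S l j.
Definition sum_all r j := \sum_(S : {set I} | #|S| == r) \sum_l tau S l j.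

Lemma sum_allS r j : sum_all r.+1 j = sum_notin r.+1 j + sum_notin r j.+1.
Proof.
rewrite /sum_all /sum_notin -(sum_cardS_setD1 (fun S l => tau S l j.+1)).
rewrite -big_split /=; apply: eq_bigr => S _.
rewrite (bigID (mem S)) /= addrC; congr (_ + _).
by apply: eq_bigr => l lS; rewrite tau_shift.
Qed.

Lemma sum_all0 j : sum_all 0 j = sum_notin 0 j.
Proof.
apply: eq_bigr => S /eqP /cards0_eq ->.
by apply: eq_bigl => l; rewrite inE.
Qed.

(* Splitting [sum_all] according to [l \in S] telescopes the alternating sum. *)
Lemma alternating_sum_all r j :
  \sum_(i < r.+1) (-1) ^+ i * sum_all (r - i)%N (j + i) = sum_notin r j.
Proof.
elim: r j => [|r IH] j; first by rewrite big_ord1 expr0 mul1r addn0 sum_all0.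
rewrite big_ord_recl expr0 mul1r /= addn0 sum_allS -[RHS]addr0 -addrA.
congr (_ + _); rewrite -(IH j.+1) -big_split big1 //= => i _.
by rewrite /bump leq0n add1n subSS addSnnS exprS mulN1r mulNr addrN.
Qed.

Lemma alternating_sum_all_cardS r :
  \sum_(i < r.+1) (-1) ^+ i * sum_all (r - i)%N i.+1 =
  \sum_(S : {set I} | #|S| == r.+1) \sum_(l in S) tau (S :\ l) l 1.
Proof.
rewrite (sum_cardS_setD1 (fun S l => tau S l 1)).
exact: (alternating_sum_all r 1).
Qed.

End Telescope.

Lemma subset_power_sumSS a r k :
  subset_power_sum a r.+1 k.+1 =
  \sum_(i < r.+1) (-1) ^+ i *
    \sum_(m < k.+1) ('C(k, m) * i.+1 ^ m)%:R *
      subset_power_sum a (r - i)%N (k - m)%N * power_sum a m.+1.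
Proof.
pose tau S l j := a l * (\sum_(i in S) a i + j%:R * a l) ^+ k.
have tau_shift S l j : l \in S -> tau S l j = tau (S :\ l) l j.+1.
  by move=> lS; rewrite /tau (big_setD1 l lS) /= -natr1; congr (_ * _ ^+ _); ring.
transitivity (\sum_(S : {set I} | #|S| == r.+1) \sum_(l in S) tau (S :\ l) l 1).
  apply: eq_bigr => S _; rewrite exprS mulr_suml; apply: eq_bigr => l lS.
  by rewrite /tau mul1r addrC -(big_setD1 l lS).
rewrite -(alternating_sum_all_cardS tau_shift); apply: eq_bigr => i _.
congr (_ * _); rewrite /sum_all.
under eq_bigr => S _ do under eq_bigr => l _ do rewrite /tau exprDn mulr_sumr.
under eq_bigr => S _ do rewrite exchange_big /=.
rewrite exchange_big /=; apply: eq_bigr => m _.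
rewrite -mulrA mulr_suml mulr_sumr; apply: eq_bigr => S _.
rewrite 2!mulr_sumr; apply: eq_bigr => l _.
by rewrite natrM natrX exprMn -mulr_natr exprS; ring.
Qed.

Lemma subset_power_sum_exp0 a r : subset_power_sum a r 0 = 'C(#|I|, r)%:R.
Proof.
rewrite /subset_power_sum (eq_bigr (fun _ => 1)) => [|S _]; last by rewrite expr0.
by rewrite -big_set sumr_const card_draws.
Qed.

Lemma subset_power_sum0S a k : subset_power_sum a 0 k.+1 = 0.
Proof. by apply: big1 => S /eqP /cards0_eq ->; rewrite big_set0 expr0n. Qed.

Lemma eq_subset_power_sum a b K :
    (forall m, (1 <= m <= K)%N -> power_sum a m = power_sum b m) ->
  forall r k, (k <= K)%N -> subset_power_sum a r k = subset_power_sum b r k.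
Proof.
move=> eq_ab r k; elim/ltn_ind: k r => -[|k] IH r leK.
  by rewrite !subset_power_sum_exp0.
case: r => [|r]; first by rewrite !subset_power_sum0S.
rewrite !subset_power_sumSS; apply: eq_bigr => i _; congr (_ * _).
apply: eq_bigr => m _; rewrite IH ?eq_ab //.
- by rewrite /= (leq_trans _ leK) // ltnS -ltnS.
- by rewrite ltnS leq_subr.
- by rewrite (leq_trans (leq_subr _ _) (ltnW leK)).
Qed.

Lemma moserF_alt r k n :
  (moserF r.+1 k.+1 n)%:~R =
  \sum_(i < r.+1) (-1) ^+ i * ((i.+1) ^ k * 'C(n, r - i))%:R :> R.
Proof.
rewrite /moserF big_add1 /= big_mkord rmorph_sum; apply: eq_bigr => i _.
by rewrite !rmorphM rmorphXn rmorphN rmorph1 !rmorph_nat subSS mulrA.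
Qed.

(* Once the power sums agree up to [k], only the term with [p_{k+1}] survives
   in the difference of the recursions, and its coefficient is [F_{r+1,k+1}(n)]. *)
Lemma subset_power_sumSS_diff a b r k :
    (forall m, (1 <= m <= k)%N -> power_sum a m = power_sum b m) ->
  subset_power_sum a r.+1 k.+1 - subset_power_sum b r.+1 k.+1 =
  (moserF r.+1 k.+1 #|I|)%:~R * (power_sum a k.+1 - power_sum b k.+1).
Proof.
move=> eq_ab; rewrite !subset_power_sumSS -sumrB moserF_alt mulr_suml.
apply: eq_bigr => i _; rewrite -mulrBr -mulrA; congr (_ * _).
rewrite -sumrB big_ord_recr /= big1 ?add0r => [|m _].
  by rewrite subnn !subset_power_sum_exp0 binn mul1n -mulrBr natrM mulrC.
by rewrite (eq_subset_power_sum eq_ab) ?leq_subr // eq_ab ?subrr //=.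
Qed.

Lemma newton_elem_sym a r :
  r.+1%:R * elem_sym a r.+1 =
  \sum_(i < r.+1) (-1) ^+ i * (elem_sym a (r - i)%N * power_sum a i.+1).
Proof.
pose tau S l j := (\prod_(i in S) a i) * a l ^+ j.
have tau_shift S l j : l \in S -> tau S l j = tau (S :\ l) l j.+1.
  by move=> lS; rewrite /tau (big_setD1 l lS) /= exprS; ring.
transitivity (\sum_(i < r.+1) (-1) ^+ i * sum_all tau (r - i)%N i.+1); last first.
  apply: eq_bigr => i _; congr (_ * _).
  by rewrite /elem_sym mulr_suml; apply: eq_bigr => S _; rewrite mulr_sumr.
rewrite (alternating_sum_all_cardS tau_shift) /elem_sym mulr_sumr.
apply: eq_bigr => S /eqP cardS.
rewrite [RHS](eq_bigr (fun _ => \prod_(i in S) a i)) => [|l lS].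
  by rewrite sumr_const cardS mulr_natl.
by rewrite /tau expr1 mulrC -(big_setD1 l lS).
Qed.

End SubsetSums.

Section CharZero.
Variables (R : numDomainType) (I : finType).
Implicit Types (a b : I -> R).

Lemma eq_power_sum_of_subset_power_sum a b r K :
    (forall k, subset_power_sum a r.+1 k = subset_power_sum b r.+1 k) ->
    (forall k, (1 <= k <= K)%N -> moserF r.+1 k #|I| != 0) ->
  forall m, (1 <= m <= K)%N -> power_sum a m = power_sum b m.
Proof.
move=> eqQ; elim: K => [|K IH] moserK m /andP[m_gt0 le_mK].
  by case: m m_gt0 le_mK.
have eq_upto m' : (1 <= m' <= K)%N -> power_sum a m' = power_sum b m'.
  by apply: IH => k /andP[k_gt0 le_kK]; rewrite moserK // k_gt0 leqW.
move: le_mK; rewrite leq_eqVlt => /predU1P[->|lt_mK]; last first.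
  by rewrite eq_upto // m_gt0.
have := subset_power_sumSS_diff r eq_upto; rewrite !eqQ subrr => /esym/eqP.
by rewrite mulf_eq0 intr_eq0 (negbTE (moserK _ _)) ?leqnn //= subr_eq0 => /eqP.
Qed.

Lemma elem_sym_gt_card a r : (#|I| < r)%N -> elem_sym a r = 0.
Proof.
move=> lt_Ir; apply: big_pred0 => S; apply/negbTE/eqP => cardS.
by move: (max_card (mem S)); rewrite cardS leqNgt lt_Ir.
Qed.

Lemma eq_elem_sym_of_power_sum a b :
    (forall m, (1 <= m <= #|I|)%N -> power_sum a m = power_sum b m) ->
  forall r, elem_sym a r = elem_sym b r.
Proof.
move=> eq_ab; elim/ltn_ind => -[|r] IH.
  by apply: eq_bigr => S /eqP /cards0_eq ->; rewrite !big_set0.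
have [lt_Ir|le_rI] := ltnP #|I| r.+1; first by rewrite !elem_sym_gt_card.
apply: (mulfI (x := r.+1%:R)); first by rewrite pnatr_eq0.
rewrite !newton_elem_sym; apply: eq_bigr => i _.
by rewrite IH ?eq_ab ?ltnS ?leq_subr //= (leq_trans _ le_rI).
Qed.

End CharZero.

Lemma meval_mesym (R : comNzRingType) n (v : 'I_n -> R) k :
  (mesym n R k).@[v] = elem_sym v k.
Proof.
rewrite /mesym raddf_sum; apply: eq_bigr => S _.
apply: (big_ind2 (fun p x => p.@[v] = x)) => [|p x q y <- <-|i _].
- exact: meval1.
- exact: mevalM.
- exact: mevalXU.
Qed.

Lemma perm_eq_of_elem_sym (F : fieldType) n (A B : n.-tuple F) :
  (forall r, elem_sym (tnth A) r = elem_sym (tnth B) r) -> perm_eq A B.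
Proof.
move=> eqAB; apply: prod_XsubC_eq; apply/polyP => i.
have [le_in|lt_ni] := leqP i n; last first.
  by rewrite !nth_default // size_prod_XsubC size_tuple.
have -> : i = (n - @inord n (n - i))%N by rewrite inordK ?subKn // ltnS leq_subr.
by rewrite !mroots_coeff !meval_mesym eqAB.
Qed.

Lemma sum_subsums_exp (R : comNzRingType) n s (A : n.-tuple R) k :
  \sum_(x <- subsums s A) x ^+ k = subset_power_sum (tnth A) s k.
Proof. by rewrite big_map big_enum; apply: eq_bigl => S; rewrite inE. Qed.

Theorem mainTheorem5 (C : numClosedFieldType) (n s : nat) :
  (1 <= s)%N -> (s < n)%N ->
  (forall k : nat, (1 <= k <= n)%N -> moserF s k n != 0) ->
  forall A B : n.-tuple C,
    perm_eq (subsums s A) (subsums s B) -> perm_eq A B.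
Proof.
case: s => // r _ _ moser_neq0 A B eq_subsums.
have eqQ k : subset_power_sum (tnth A) r.+1 k = subset_power_sum (tnth B) r.+1 k.
  by rewrite -!sum_subsums_exp; apply: perm_big.
apply/perm_eq_of_elem_sym/eq_elem_sym_of_power_sum => m.
by rewrite card_ord; apply: (eq_power_sum_of_subset_power_sum eqQ); rewrite card_ord.
Qed.
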